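(* There are absolute constants $\kappa_0\ge1$ and $c>0$ such that the following holds for every $\epsilon\in(0,1/4)$. Any quantum query algorithm which, given unitaries $\mathcal O_\rho,\mathcal O_\sigma$ preparing purifications of arbitrary mixed states $\rho,\sigma$ satisfying $\rho\ge I/\kappa_0$ and $\sigma\ge I/\kappa_0$, outputs an estimate of $F(\rho,\sigma)$ within additive error $\epsilon$ with probability at least $2/3$, must make at least $c/\epsilon$ queries to $\mathcal O_\rho,\mathcal O_\sigma$ on some such input. In other words, fidelity estimation to additive error $\epsilon$ requires $\Omega(1/\epsilon)$ queries even when $\kappa_\rho=\kappa_\sigma=\Theta(1)$.
   Context: The (Uhlmann) fidelity is $F(\rho,\sigma):=\operatorname{Tr}\big((\sigma^{1/2}\rho\sigma^{1/2})^{1/2}\big)$. A unitary $\mathcal O_\rho$ on $n+a$ qubits prepares a purification of $\rho$ if $\operatorname{Tr}_a(\mathcal O_\rho|0\rangle\langle0|\mathcal O_\rho^\dagger)=\rho$. A query means one use of any of $\mathcal O$, $\mathcal O^\dagger$, controlled-$\mathcal O$, controlled-$\mathcal O^\dagger$. Inequalities are in the Loewner order. *)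

From HB Require Import structures.
From mathcomp Require Import all_boot all_order all_algebra.
From mathcomp Require Import complex mxtens.
From mathcomp Require Import boolp classical_sets reals.
Set Implicit Arguments. Unset Strict Implicit. Unset Printing Implicit Defensive.
Import Order.TTheory GRing.Theory Num.Theory.
Local Open Scope ring_scope.
Local Open Scope complex_scope.

Section Quantum.
Variable R : realType.
Local Notation C := R[i].

Definition adj {m n} (A : 'M[C]_(m, n)) : 'M[C]_(n, m) := (map_mx (@conjc R) A)^T.

Definition unitary {n} (U : 'M[C]_n) : Prop := U *m adj U = 1%:M.

(* positive semidefinite: <v, A v> >= 0 for every complex vector v
   (in the order of C, 0 <= z means z is real and nonnegative) *)
Definition psd {n} (A : 'M[C]_n) : Prop :=
  forall v : 'cV[C]_n, 0 <= (adj v *m A *m v) ord0 ord0.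

Definition loewner_le {n} (A B : 'M[C]_n) : Prop := psd (B - A).

Definition msqrt {n} (A : 'M[C]_n) : 'M[C]_n :=
  xget 0 [set B | psd B /\ B *m B = A].

Definition fidelity {n} (rho sigma : 'M[C]_n) : C :=
  \tr (msqrt (msqrt sigma *m rho *m msqrt sigma)).

Definition ket0 {d} : 'cV[C]_d := \col_i ((nat_of_ord i == 0)%N)%:R.

(* partial trace over the second tensor factor of a pure state psi on
   C^m (x) C^k (index (i,j) |-> i*k + j, matching tensmx) *)
Definition ptrace_pure {m k} (psi : 'cV[C]_(m * k)) : 'M[C]_m :=
  \matrix_(i, j) \sum_(l < k)
     psi (mxtens_index (i, l)) ord0 * conjc (psi (mxtens_index (j, l)) ord0).

Definition prepared_state {n a} (O : 'M[C]_(2 ^ n * 2 ^ a)) : 'M[C]_(2 ^ n) :=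
  ptrace_pure (O *m ket0).

Definition admissible {n a} (kappa0 : R) (O : 'M[C]_(2 ^ n * 2 ^ a)) : Prop :=
  unitary O /\ loewner_le ((kappa0^-1)%:C%:M) (prepared_state O).

(* Workspace: C^2 (control qubit) (x) C^D (oracle register, D = 2^(n+a))
   (x) C^W (remaining workspace). *)
Definition query_op {D W} (Orho Osig : 'M[C]_D) (q : bool * bool * bool)
  : 'M[C]_(2 * D * W) :=
  let: (which, dag, ctrl) := q in
  let O0 := if which then Osig else Orho in
  let O := if dag then adj O0 else O0 in
  let P0 : 'M[C]_2 := delta_mx ord0 ord0 in
  let P1 : 'M[C]_2 := delta_mx ord_max ord_max in
  let G : 'M[C]_(2 * D) :=
    if ctrl then P0 *t (1%:M : 'M[C]_D) + P1 *t O
    else (1%:M : 'M[C]_2) *t O in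
  G *t (1%:M : 'M[C]_W).

Fixpoint alg_state {D W} (U : nat -> 'M[C]_(2 * D * W))
  (q : nat -> bool * bool * bool) (Orho Osig : 'M[C]_D) (k : nat)
  : 'cV[C]_(2 * D * W) :=
  match k with
  | 0 => U 0%N *m ket0
  | k'.+1 => U k *m (query_op Orho Osig (q k') *m alg_state U q Orho Osig k')
  end.

Definition success_prob {D W} (T : nat) (U : nat -> 'M[C]_(2 * D * W))
  (q : nat -> bool * bool * bool) (est : 'I_(2 * D * W) -> R)
  (Orho Osig : 'M[C]_D) (f : C) (eps : R) : C :=
  \sum_(k < 2 * D * W | `|(est k)%:C - f| <= eps%:C)
     `|alg_state U q Orho Osig T k ord0| ^+ 2.

End Quantum.

From HB Require Import structures.
From mathcomp Require Import all_boot all_order all_algebra.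
From mathcomp Require Import complex mxtens perm.
From mathcomp Require Import boolp classical_sets reals.
From mathcomp Require Import ring lra.
Set Implicit Arguments. Unset Strict Implicit. Unset Printing Implicit Defensive.
Import Order.TTheory GRing.Theory Num.Theory.
Local Open Scope ring_scope.
Local Open Scope complex_scope.

(* The hard instance lives on one qubit: rho = diag(c^2, s^2) and sigma = diag(s^2, c^2)
   with c^2 + s^2 = 1 and c^2, s^2 >= 1/64, so that F(rho, sigma) = 2cs.  Both states are
   prepared by O(c, s) = cswap (rot(c, s) (x) I), which sends |0>|0> to c|0>|0> + s|1>|1>,
   and O(c, s) - O(c', s') is sqrt((c - c')^2 + (s - s')^2) times a unitary.  Moving s from
   1/8 to 1/8 + 2 eps changes 2cs by more than 2 eps but the oracles only by sqrt 5 eps.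
   An estimator that succeeds on both inputs must end in states at squared distance
   >= 1/18, while by the hybrid argument T queries move the final state by at most
   sqrt 5 T eps; hence T >= 1/(12 eps). *)

Section Adjoint.
Variable R : realType.
Local Notation C := R[i].

Lemma adjmM m n p (A : 'M[C]_(m, n)) (B : 'M[C]_(n, p)) : adj (A *m B) = adj B *m adj A.
Proof. by rewrite /adj map_mxM trmx_mul. Qed.

Lemma adjmK m n (A : 'M[C]_(m, n)) : adj (adj A) = A.
Proof. by apply/matrixP => i j; rewrite !mxE conjcK. Qed.

Lemma adjmD m n (A B : 'M[C]_(m, n)) : adj (A + B) = adj A + adj B.
Proof. by apply/matrixP => i j; rewrite !mxE rmorphD. Qed.

Lemma adjmB m n (A B : 'M[C]_(m, n)) : adj (A - B) = adj A - adj B.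
Proof. by apply/matrixP => i j; rewrite !mxE rmorphB. Qed.

Lemma adjm1 n : adj (1%:M : 'M[C]_n) = 1%:M.
Proof. by apply/matrixP => i j; rewrite !mxE rmorph_nat eq_sym. Qed.

Lemma adjmT m n p q (A : 'M[C]_(m, n)) (B : 'M[C]_(p, q)) :
  adj (A *t B) = adj A *t adj B.
Proof. by rewrite /adj map_mxT trmx_tens. Qed.

Lemma adjm_delta n (i : 'I_n) : adj (delta_mx i i : 'M[C]_n) = delta_mx i i.
Proof. by apply/matrixP => a b; rewrite !mxE rmorph_nat andbC. Qed.

Lemma unitary_adj n (U : 'M[C]_n) : unitary U -> adj U *m U = 1%:M.
Proof. exact: mulmx1C. Qed.

Lemma tensmxDl m n p q (A A' : 'M[C]_(m, n)) (B : 'M[C]_(p, q)) :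
  (A + A') *t B = A *t B + A' *t B.
Proof. by apply/matrixP => i j; rewrite !mxE mulrDl. Qed.

Lemma tensmxBl m n p q (A A' : 'M[C]_(m, n)) (B : 'M[C]_(p, q)) :
  (A - A') *t B = A *t B - A' *t B.
Proof. by apply/matrixP => i j; rewrite !mxE mulrBl. Qed.

Lemma tensmxBr m n p q (A : 'M[C]_(m, n)) (B B' : 'M[C]_(p, q)) :
  A *t (B - B') = A *t B - A *t B'.
Proof. by apply/matrixP => i j; rewrite !mxE mulrBr. Qed.

Lemma tensmxZl m n p q (a : C) (A : 'M[C]_(m, n)) (B : 'M[C]_(p, q)) :
  (a *: A) *t B = a *: (A *t B).
Proof. by apply/matrixP => i j; rewrite !mxE mulrA. Qed.

Lemma tensmxZr m n p q (a : C) (A : 'M[C]_(m, n)) (B : 'M[C]_(p, q)) :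
  A *t (a *: B) = a *: (A *t B).
Proof. by apply/matrixP => i j; rewrite !mxE mulrCA. Qed.

Lemma tensmx11 m n : (1%:M : 'M[C]_m) *t (1%:M : 'M[C]_n) = 1%:M.
Proof.
apply/matrixP => i j.
case: (mxtens_indexP i) => i0 i1; case: (mxtens_indexP j) => j0 j1.
rewrite tensmxE !mxE -natrM mulnb.
by rewrite (inj_eq (can_inj (@mxtens_indexK _ _))) xpair_eqE.
Qed.

Lemma tensmx_scalarl m n (a : C) : (a%:M : 'M[C]_m) *t (1%:M : 'M[C]_n) = a%:M.
Proof. by rewrite -[a%:M]scalemx1 tensmxZl tensmx11 scalemx1. Qed.

Lemma tensmx_scalarr m n p (a : C) (A : 'M[C]_(m, n)) :
  A *t (a%:M : 'M[C]_p) = a *: (A *t 1%:M).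
Proof. by rewrite -tensmxZr scalemx1. Qed.

Lemma unitary1 n : unitary (1%:M : 'M[C]_n).
Proof. by rewrite /unitary adjm1 mulmx1. Qed.

Lemma tensmx_unitary m n (A : 'M[C]_m) (B : 'M[C]_n) :
  unitary A -> unitary B -> unitary (A *t B).
Proof. by move=> hA hB; rewrite /unitary adjmT tensmx_mul hA hB tensmx11. Qed.

End Adjoint.

Section VectorNorm.
Variable R : realType.
Local Notation C := R[i].

Definition dotv n (u v : 'cV[C]_n) : C := (adj u *m v) 0 0.

(* Computed on real coordinates, so that norm identities become real polynomial identities. *)
Definition sqnormv n (v : 'cV[C]_n) : R :=
  \sum_i ((complex.Re (v i 0)) ^+ 2 + (complex.Im (v i 0)) ^+ 2).

Definition rdotv n (u v : 'cV[C]_n) : R :=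
  \sum_i (complex.Re (u i 0) * complex.Re (v i 0)
          + complex.Im (u i 0) * complex.Im (v i 0)).

Definition normv n (v : 'cV[C]_n) : R := Num.sqrt (sqnormv v).

Lemma sqnormv_ge0 n (v : 'cV[C]_n) : 0 <= sqnormv v.
Proof. by apply: sumr_ge0 => i _; rewrite addr_ge0 // sqr_ge0. Qed.

Lemma sqnormv0 n : sqnormv (0 : 'cV[C]_n) = 0.
Proof. by rewrite /sqnormv big1 // => i _; rewrite mxE /= expr0n /= addr0. Qed.

Lemma dotvE n (u v : 'cV[C]_n) : dotv u v = \sum_l (u l 0)^* * v l 0.
Proof. by rewrite /dotv mxE; apply: eq_bigr => l _; rewrite !mxE. Qed.

Lemma dotvv n (v : 'cV[C]_n) : dotv v v = (sqnormv v)%:C.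
Proof.
rewrite dotvE /sqnormv rmorph_sum; apply: eq_bigr => i _.
case: (v i 0) => a b /=; simpc.
by apply/eqP; rewrite eq_complex /= !expr2 eqxx /=; apply/eqP; ring.
Qed.

Lemma sqnormv_unitary n (U : 'M[C]_n) v : unitary U -> sqnormv (U *m v) = sqnormv v.
Proof.
move=> hU; apply: (@complexI R); rewrite -!dotvv /dotv adjmM.
by rewrite -(mulmxA (adj v)) (mulmxA (adj U)) unitary_adj // mul1mx.
Qed.

Lemma normv_unitary n (U : 'M[C]_n) v : unitary U -> normv (U *m v) = normv v.
Proof. by move=> hU; rewrite /normv sqnormv_unitary. Qed.

Lemma sqnormvD n (u v : 'cV[C]_n) :
  sqnormv (u + v) = sqnormv u + 2 * rdotv u v + sqnormv v.
Proof.
rewrite /sqnormv /rdotv mulr_sumr -!big_split /=; apply: eq_bigr => i _.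
by rewrite !mxE; case: (u i 0) => x y; case: (v i 0) => z w /=; ring.
Qed.

Lemma rdotvZr n (u v : 'cV[C]_n) t : rdotv u (t%:C *: v) = t * rdotv u v.
Proof.
rewrite /rdotv mulr_sumr; apply: eq_bigr => i _.
by rewrite !mxE; case: (u i 0) => x y; case: (v i 0) => z w /=; ring.
Qed.

Lemma sqnormvZ n (v : 'cV[C]_n) t : sqnormv (t%:C *: v) = t ^+ 2 * sqnormv v.
Proof.
rewrite /sqnormv mulr_sumr; apply: eq_bigr => i _.
by rewrite !mxE; case: (v i 0) => z w /=; ring.
Qed.

(* The quadratic [t |-> |u + t v|^2] is nonnegative, so its discriminant is not positive. *)
Lemma rdotv_CauchySchwarz n (u v : 'cV[C]_n) :
  rdotv u v ^+ 2 <= sqnormv u * sqnormv v.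
Proof.
set a := sqnormv u; set b := sqnormv v; set r := rdotv u v.
have quad_ge0 t : 0 <= a + 2 * (t * r) + t ^+ 2 * b.
  by rewrite /a /b /r -rdotvZr -sqnormvZ -sqnormvD sqnormv_ge0.
have a_ge0 : 0 <= a := sqnormv_ge0 u.
have [b0|b_neq0] := eqVneq b 0.
  have [r0|r_neq0] := eqVneq r 0; first by rewrite r0 b0 expr0n mulr0.
  have := quad_ge0 (- (a + 1) / (2 * r)).
  have -> : 2 * ((- (a + 1) / (2 * r)) * r) = - (a + 1) by field.
  by rewrite b0 mulr0 addr0; lra.
have b_gt0 : 0 < b by rewrite lt_def b_neq0 sqnormv_ge0.
have := quad_ge0 (- r / b).
have -> : a + 2 * (- r / b * r) + (- r / b) ^+ 2 * b = a - r ^+ 2 / b by field.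
by rewrite subr_ge0 ler_pdivrMr.
Qed.

Lemma normv_ge0 n (v : 'cV[C]_n) : 0 <= normv v.
Proof. exact: sqrtr_ge0. Qed.

Lemma sqr_normv n (v : 'cV[C]_n) : normv v ^+ 2 = sqnormv v.
Proof. by rewrite sqr_sqrtr // sqnormv_ge0. Qed.

Lemma normvD n (u v : 'cV[C]_n) : normv (u + v) <= normv u + normv v.
Proof.
have r_le : rdotv u v <= normv u * normv v.
  apply: le_trans (ler_norm _) _.
  rewrite -sqrtr_sqr /normv -sqrtrM ?sqnormv_ge0 //.
  by rewrite ler_sqrt ?mulr_ge0 ?sqnormv_ge0 // rdotv_CauchySchwarz.
rewrite -(@ler_pXn2r _ 2) ?qualifE /= ?addr_ge0 ?normv_ge0 //.
rewrite sqrrD !sqr_normv sqnormvD mulr2n; lra.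
Qed.

Lemma sqnormv_ket0 n : sqnormv (@ket0 R n) <= 1.
Proof.
case: n => [|n]; first by rewrite /sqnormv big_ord0 ler01.
rewrite /sqnormv big_ord_recl big1 ?addr0.
  by rewrite !mxE /= expr1n expr0n /= addr0.
by move=> i _; rewrite !mxE /= expr0n /= addr0.
Qed.

End VectorNorm.

Section QueryOperators.
Variable R : realType.
Local Notation C := R[i].

Definition orth_proj n (P : 'M[C]_n) : Prop := adj P = P /\ P *m P = P.

Definition scaled_unitary n (d2 : R) (M : 'M[C]_n) : Prop :=
  adj M *m M = d2%:C%:M /\ M *m adj M = d2%:C%:M.

Lemma scaled_unitary_adj n d2 (M : 'M[C]_n) :
  scaled_unitary d2 M -> scaled_unitary d2 (adj M).
Proof. by case=> h1 h2; split; rewrite adjmK. Qed.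

Lemma orth_proj1 n : orth_proj (1%:M : 'M[C]_n).
Proof. by split; rewrite ?adjm1 ?mul1mx. Qed.

Lemma orth_projC n (P : 'M[C]_n) : orth_proj P -> orth_proj (1%:M - P).
Proof.
case=> sa id; split; first by rewrite adjmB adjm1 sa.
by rewrite mulmxBl mulmxBr !mul1mx mulmxBr mulmx1 id subrr subr0.
Qed.

Lemma orth_projT m n (P : 'M[C]_m) : orth_proj P -> orth_proj (P *t (1%:M : 'M[C]_n)).
Proof. by case=> sa id; split; rewrite ?adjmT ?adjm1 ?sa // tensmx_mul id mulmx1. Qed.

Lemma orth_proj_delta n (i : 'I_n) : orth_proj (delta_mx i i : 'M[C]_n).
Proof. by split; rewrite ?adjm_delta // mul_delta_mx. Qed.

Lemma orth_proj_form n (P : 'M[C]_n) v :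
  orth_proj P -> (adj v *m P *m v) 0 0 = (sqnormv (P *m v))%:C.
Proof.
by case=> sa id; rewrite -dotvv /dotv adjmM sa !mulmxA -(mulmxA (adj v) P P) id.
Qed.

(* Pythagoras: [|v|^2 = |P v|^2 + |(1 - P) v|^2]. *)
Lemma sqnormv_orth_proj n (P : 'M[C]_n) v : orth_proj P -> sqnormv (P *m v) <= sqnormv v.
Proof.
move=> hP.
have split_v : (sqnormv v)%:C = (sqnormv (P *m v))%:C + (sqnormv ((1%:M - P) *m v))%:C.
  rewrite -dotvv -(orth_proj_form v hP) -(orth_proj_form v (orth_projC hP)) /dotv.
  have -> : adj v *m v = adj v *m P *m v + adj v *m (1%:M - P) *m v.
    by rewrite -mulmxDl -mulmxDr addrC subrK mulmx1.
  by rewrite mxE.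
move: (congr1 (@complex.Re R) split_v) => /= ->.
by rewrite lerDl sqnormv_ge0.
Qed.

Lemma sqnormv_proj_tens_scaled_unitary D W d2 (P : 'M[C]_2) (M : 'M[C]_D)
    (v : 'cV[C]_(2 * D * W)) :
  orth_proj P -> adj M *m M = d2%:C%:M -> 0 <= d2 ->
  sqnormv ((P *t M *t (1%:M : 'M[C]_W)) *m v) <= d2 * sqnormv v.
Proof.
move=> hP hM d2_ge0.
set Q := P *t (1%:M : 'M[C]_D) *t (1%:M : 'M[C]_W).
have hQ : orth_proj Q by do 2 apply: orth_projT.
have e : (sqnormv ((P *t M *t 1%:M) *m v))%:C = d2%:C * (sqnormv (Q *m v))%:C.
  rewrite -(orth_proj_form v hQ) -dotvv /dotv.
  rewrite adjmM !adjmT adjm1 mulmxA -(mulmxA (adj v) (_ *t _)) !tensmx_mul mulmx1 hM.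
  case: hP => -> ->; rewrite (tensmx_scalarr D d2%:C) tensmxZl -scalemxAr -scalemxAl.
  by rewrite mxE.
have /= -> := congr1 (@complex.Re R) e.
by rewrite mulr0 subr0 ler_wpM2l // sqnormv_orth_proj.
Qed.

Lemma delta_mx_sum2 : (delta_mx ord0 ord0 : 'M[C]_2) + delta_mx ord_max ord_max = 1%:M.
Proof.
apply/matrixP => i j; rewrite !mxE.
by case: i => [[|[|i]] Hi] //; case: j => [[|[|j]] Hj] //=; rewrite ?addr0 ?add0r.
Qed.

Lemma controlled_unitary n (O : 'M[C]_n) :
  O *m adj O = 1%:M ->
  unitary (delta_mx ord0 ord0 *t 1%:M + delta_mx ord_max ord_max *t O : 'M[C]_(2 * n)).
Proof.
move=> hO; rewrite /unitary adjmD !adjmT adjm1 !adjm_delta mulmxDl !mulmxDr !tensmx_mul.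
rewrite !mul_delta_mx mul1mx hO !mul_delta_mx_0 // !tens0mx addr0 add0r.
by rewrite -tensmxDl delta_mx_sum2 tensmx11.
Qed.

Lemma query_op_unitary D W (Orho Osig : 'M[C]_D) q :
  unitary Orho -> unitary Osig -> unitary (query_op (W := W) Orho Osig q).
Proof.
move=> hrho hsig; case: q => [[which dag] ctrl] /=; apply: tensmx_unitary; last exact: unitary1.
have hO0 : unitary (if which then Osig else Orho) by case: which.
move: (if which then Osig else Orho) hO0 => O0 hO0.
have hO : (if dag then adj O0 else O0) *m adj (if dag then adj O0 else O0) = 1%:M.
  by case: dag; rewrite ?adjmK ?unitary_adj.
move: (if dag then adj O0 else O0) hO => O hO.
by case: ctrl; [apply: controlled_unitary | apply: tensmx_unitary; [exact: unitary1 | exact: hO]].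
Qed.

Lemma query_op_diff D W d2 (Orho Osig Orho' Osig' : 'M[C]_D) q (v : 'cV[C]_(2 * D * W)) :
  scaled_unitary d2 (Orho - Orho') -> scaled_unitary d2 (Osig - Osig') -> 0 <= d2 ->
  sqnormv ((query_op Orho Osig q - query_op Orho' Osig' q) *m v) <= d2 * sqnormv v.
Proof.
move=> drho dsig d2_ge0; case: q => [[which dag] ctrl] /=.
have d0 : scaled_unitary d2 ((if which then Osig else Orho) - (if which then Osig' else Orho')).
  by case: which.
move: (if which then Osig else Orho) (if which then Osig' else Orho') d0 => O0 O0' d0.
have [hOO _] : scaled_unitary d2 ((if dag then adj O0 else O0) - (if dag then adj O0' else O0')).
  by case: dag => //; rewrite -adjmB; apply: scaled_unitary_adj.
move: (if dag then adj O0 else O0) (if dag then adj O0' else O0') hOO => O O' hOO.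
rewrite -tensmxBl; case: ctrl.
  rewrite opprD addrACA subrr add0r -tensmxBr.
  exact: sqnormv_proj_tens_scaled_unitary (orth_proj_delta _) hOO d2_ge0.
rewrite -tensmxBr.
exact: sqnormv_proj_tens_scaled_unitary (orth_proj1 _) hOO d2_ge0.
Qed.

End QueryOperators.

Section Hybrid.
Variable R : realType.
Local Notation C := R[i].
Variables (D W T : nat) (U : nat -> 'M[C]_(2 * D * W)) (q : nat -> bool * bool * bool).
Hypothesis U_unitary : forall k, (k <= T)%N -> unitary (U k).

Lemma sqnormv_alg_state (Orho Osig : 'M[C]_D) k :
  unitary Orho -> unitary Osig -> (k <= T)%N ->
  sqnormv (alg_state U q Orho Osig k) <= 1.
Proof.
move=> hrho hsig; elim: k => [|k IHk] hk /=.
  by rewrite (sqnormv_unitary _ (U_unitary hk)) sqnormv_ket0.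
rewrite (sqnormv_unitary _ (U_unitary hk)) (sqnormv_unitary _ (query_op_unitary _ _ hrho hsig)).
exact/IHk/ltnW.
Qed.

(* Each query adds at most [sqrt d2] to the distance, the unitaries [U k] none. *)
Lemma alg_state_hybrid d2 (Orho Osig Orho' Osig' : 'M[C]_D) k :
  unitary Orho -> unitary Osig -> unitary Orho' -> unitary Osig' ->
  scaled_unitary d2 (Orho - Orho') -> scaled_unitary d2 (Osig - Osig') -> 0 <= d2 ->
  (k <= T)%N ->
  normv (alg_state U q Orho Osig k - alg_state U q Orho' Osig' k) <= k%:R * Num.sqrt d2.
Proof.
move=> hrho hsig hrho' hsig' drho dsig d2_ge0; elim: k => [|k IHk] hk /=.
  by rewrite subrr /normv sqnormv0 sqrtr0 mul0r.
rewrite -mulmxBr (normv_unitary _ (U_unitary hk)).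
set psi := alg_state U q Orho Osig k; set psi' := alg_state U q Orho' Osig' k.
set Q := query_op Orho Osig (q k); set Q' := query_op Orho' Osig' (q k).
have -> : Q *m psi - Q' *m psi' = Q *m (psi - psi') + (Q - Q') *m psi'.
  by rewrite mulmxBr mulmxBl addrA subrK.
apply: le_trans (normvD _ _) _.
rewrite (normv_unitary _ (query_op_unitary _ _ hrho hsig)).
have hk' : (k <= T)%N by apply: ltnW.
have step : normv ((Q - Q') *m psi') <= Num.sqrt d2.
  rewrite /normv ler_sqrt //.
  apply: le_trans (query_op_diff _ _ drho dsig d2_ge0) _.
  by rewrite ler_piMr // sqnormv_alg_state.
have := IHk hk'; rewrite -natr1 mulrDl mul1r; lra.
Qed.

End Hybrid.

Section Separation.
Variable R : realType.
Local Notation C := R[i].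

(* [b] has mass [<= 1/3] on [P1] because it has mass [>= 2/3] on the disjoint [P2]. *)
Lemma sum_separation n (a b e : 'I_n -> R) (P1 P2 : pred 'I_n) :
  (forall k, P1 k -> P2 k -> False) ->
  (forall k, 0 <= b k) -> (forall k, 0 <= e k) ->
  (forall k, a k <= 3 * e k + 3 / 2 * b k) ->
  2 / 3 <= \sum_(k | P1 k) a k -> 2 / 3 <= \sum_(k | P2 k) b k ->
  \sum_k b k <= 1 -> 1 / 18 <= \sum_k e k.
Proof.
move=> disj b_ge0 e_ge0 ab_le a_P1 b_P2 b_le1.
have a_le : \sum_(k | P1 k) a k <= 3 * \sum_(k | P1 k) e k + 3 / 2 * \sum_(k | P1 k) b k.
  by rewrite !mulr_sumr -big_split; apply: ler_sum.
have e_le : \sum_(k | P1 k) e k <= \sum_k e k.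
  by rewrite [leRHS](bigID P1) lerDl sumr_ge0.
have b_split : \sum_(k | P1 k) b k + \sum_(k | P2 k) b k <= \sum_k b k.
  rewrite !(big_mkcond P1) !(big_mkcond P2) -big_split; apply: ler_sum => k _.
  case h1 : (P1 k); case h2 : (P2 k); rewrite /= ?addr0 ?add0r //.
  by case: (disj k h1 h2).
have : 0 <= \sum_(k | P1 k) b k by apply: sumr_ge0.
lra.
Qed.

Lemma normc_real (x : R) : `|x%:C| = `|x|%:C.
Proof. by rewrite normc_def /= expr0n /= addr0 sqrtr_sqr. Qed.

Lemma sqr_normc (z : C) : `|z| ^+ 2 = (complex.Re z ^+ 2 + complex.Im z ^+ 2)%:C.
Proof. by rewrite add_Re2_Im2. Qed.

Lemma success_separation n (psi phi : 'cV[C]_n) (est : 'I_n -> R) (f1 f2 eps : R) :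
  2 * eps < `|f1 - f2| ->
  2 / 3 <= \sum_(k < n | `|(est k)%:C - f1%:C| <= eps%:C) `|psi k 0| ^+ 2 ->
  2 / 3 <= \sum_(k < n | `|(est k)%:C - f2%:C| <= eps%:C) `|phi k 0| ^+ 2 ->
  sqnormv phi <= 1 -> 1 / 18 <= sqnormv (psi - phi).
Proof.
move=> f12 succ1 succ2 phi_le1.
have real_cond f k : (`|(est k)%:C - f%:C| <= eps%:C) = (`|est k - f| <= eps).
  by rewrite -rmorphB normc_real lecR.
have real_23 : (2 / 3 : C) = (2 / 3 : R)%:C.
  by rewrite rmorphM fmorphV /= !rmorph_nat.
move: succ1 succ2; rewrite real_23.
under eq_bigl do rewrite real_cond; under eq_bigr do rewrite sqr_normc.
rewrite -rmorph_sum lecR => succ1.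
under eq_bigl do rewrite real_cond; under eq_bigr do rewrite sqr_normc.
rewrite -rmorph_sum lecR => succ2.
apply: sum_separation succ1 succ2 phi_le1 => [k|k|k|k].
- have := ler_distD (est k) f1 f2; rewrite (distrC f1 (est k)); lra.
- by rewrite addr_ge0 ?sqr_ge0.
- by rewrite addr_ge0 ?sqr_ge0.
- (* [3 |x - y|^2 + 3/2 |y|^2 - |x|^2 = 2 |x - 3/2 y|^2] *)
  rewrite !mxE; case: (psi k 0) => x y; case: (phi k 0) => z w /=.
  have := sqr_ge0 (x - 3 / 2 * z); have := sqr_ge0 (y - 3 / 2 * w); nra.
Qed.

End Separation.

Section TwoByTwo.
Variable R : realType.
Local Notation C := R[i].
Local Notation i0 := (ord0 : 'I_2).
Local Notation i1 := (ord_max : 'I_2).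

Lemma ord2P (i : 'I_2) : i = i0 \/ i = i1.
Proof. by case: i => [[|[|k]] h] //; [left|right]; apply: val_inj. Qed.

Lemma lift0_ord0 : lift ord0 (ord0 : 'I_1) = i1.
Proof. exact: val_inj. Qed.

Lemma mulmx2E m n (A : 'M[C]_(m, 2)) (B : 'M[C]_(2, n)) i j :
  (A *m B) i j = A i i0 * B i0 j + A i i1 * B i1 j.
Proof. by rewrite !mxE !big_ord_recl big_ord0 addr0 lift0_ord0. Qed.

Lemma mxtrace2 (A : 'M[C]_2) : \tr A = A i0 i0 + A i1 i1.
Proof. by rewrite /mxtrace !big_ord_recl big_ord0 addr0 lift0_ord0. Qed.

Lemma det2 (A : 'M[C]_2) : \det A = A i0 i0 * A i1 i1 - A i0 i1 * A i1 i0.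
Proof.
rewrite (expand_det_row _ ord0) !big_ord_recl big_ord0 /cofactor !det_mx11 !mxE /=.
rewrite lift0_ord0.
have -> : lift ord_max (0 : 'I_1) = i0 :> 'I_2 by apply: val_inj.
by rewrite /= expr0 expr1 addr0; ring.
Qed.

Lemma Cayley_Hamilton2 (A : 'M[C]_2) : A *m A = \tr A *: A - (\det A)%:M.
Proof.
apply/matrixP => i j; rewrite mulmx2E !mxE mxtrace2 det2.
by case: (ord2P i) => ->; case: (ord2P j) => -> /=; ring.
Qed.

Lemma mxtrace_sqr2 (A : 'M[C]_2) : \tr (A *m A) = \tr A ^+ 2 - 2 * \det A.
Proof. by rewrite !mxtrace2 det2 !mulmx2E; ring. Qed.

Lemma form2E (A : 'M[C]_2) (v : 'cV[C]_2) :
  (adj v *m A *m v) 0 0 = (v i0 0)^* * (A i0 i0 * v i0 0 + A i0 i1 * v i1 0)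
                        + (v i1 0)^* * (A i1 i0 * v i0 0 + A i1 i1 * v i1 0).
Proof.
rewrite !mxE !big_ord_recl !big_ord0 !mxE !big_ord_recl !big_ord0 /= lift0_ord0 /adj !mxE.
ring.
Qed.

Lemma psd2_form (A : 'M[C]_2) : psd A -> forall v0 v1 : C,
  0 <= v0^* * (A i0 i0 * v0 + A i0 i1 * v1) + v1^* * (A i1 i0 * v0 + A i1 i1 * v1).
Proof.
by move=> hA v0 v1; have := hA (\col_i (if i == i0 then v0 else v1)); rewrite form2E !mxE.
Qed.

Lemma psd2_herm (A : 'M[C]_2) : psd A ->
  [/\ A i1 i0 = (A i0 i1)^*, 0 <= A i0 i0 & 0 <= A i1 i1].
Proof.
move/psd2_form.
case: (A i0 i0) => p p'; case: (A i0 i1) => b b'; case: (A i1 i0) => c c';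
case: (A i1 i1) => d d' q.
have := q (Complex 1 0) (Complex 0 0); simpc; case/andP => /eqP e1 p_ge0.
have := q (Complex 0 0) (Complex 1 0); simpc; case/andP => /eqP e2 d_ge0.
have := q (Complex 1 0) (Complex 1 0); simpc; case/andP => /eqP e3 _.
have := q (Complex 1 0) (Complex 0 1); simpc; case/andP => /eqP e4 _.
have -> : c = b by lra.
have -> : c' = - b' by lra.
by split; rewrite ?e1 ?e2 ?eqxx.
Qed.

Lemma psd2_det_ge0 (A : 'M[C]_2) : psd A -> 0 <= \det A.
Proof.
move=> hA; have [h10 h00 h11] := psd2_herm hA.
move: (psd2_form hA) h00 h11; rewrite det2 h10.
case: (A i0 i0) => p p'; case: (A i0 i1) => b b'; case: (A i1 i1) => d d' q.
simpc => /andP[/eqP p'0 p_ge0] /andP[/eqP d'0 d_ge0].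
subst p' d'.
set B := b * b + b' * b'.
have := q (Complex (- b) (- b')) (Complex p 0); simpc => /andP[_ g5].
have := q (Complex d 0) (Complex (- b) b'); simpc => /andP[_ g6].
have := q (Complex 1 0) (Complex (- b) b'); simpc => /andP[_ g7].
have h5 : 0 <= p * (p * d - B) by rewrite /B; nra.
have h6 : 0 <= d * (p * d - B) by rewrite /B; nra.
have h7 : 0 <= p + d * B - 2 * B by rewrite /B; nra.
apply/andP; split; first by apply/eqP; ring.
rewrite [X in 0 <= X](_ : _ = p * d - B); last by rewrite /B; ring.
have [//|neg] := lerP 0 (p * d - B).
have p0 : p = 0 by nra.
have d0 : d = 0 by nra.
move: h7 neg; rewrite p0 d0; lra.
Qed.

Lemma psd2_adj (A : 'M[C]_2) : psd A -> adj A = A.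
Proof.
have conj_ge0 (z : C) : 0 <= z -> z^* = z.
  by case: z => a b; simpc; case/andP => /eqP -> _; rewrite oppr0.
case/psd2_herm => h10 h00 h11; apply/matrixP => i j; rewrite !mxE.
by case: (ord2P i) => ->; case: (ord2P j) => ->;
  [exact: conj_ge0 | rewrite h10 conjcK | rewrite h10 | exact: conj_ge0].
Qed.

Lemma psd_conj n (B X : 'M[C]_n) : adj B = B -> psd X -> psd (B *m X *m B).
Proof.
move=> hB hX v; have := hX (B *m v).
by rewrite adjmM hB !mulmxA.
Qed.

Lemma psd_scale_shift n (X : 'M[C]_n) (a d : C) :
  psd X -> 0 <= a -> 0 <= d -> psd (a *: (X + d%:M)).
Proof.
move=> hX a_ge0 d_ge0 v.
have -> : (adj v *m (a *: (X + d%:M)) *m v) 0 0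
          = a * ((adj v *m X *m v) 0 0 + d * (sqnormv v)%:C).
  rewrite -dotvv /dotv -scalemxAr -scalemxAl mulmxDr mulmxDl mul_mx_scalar -scalemxAl.
  by rewrite !mxE.
by rewrite mulr_ge0 // addr_ge0 ?hX // mulr_ge0 // ler0c sqnormv_ge0.
Qed.

(* [(X + d) / t] is a PSD square root of [X] by Cayley-Hamilton; conversely any
   PSD square root [Y] has [det Y = d >= 0], so [(tr Y)^2 = tr X + 2 det Y = t^2]. *)
Lemma msqrt2_trace (X : 'M[C]_2) (d t : C) : psd X -> 0 <= d -> 0 < t ->
  \det X = d ^+ 2 -> \tr X + 2 * d = t ^+ 2 -> \tr (msqrt X) = t.
Proof.
move=> hX d_ge0 t_gt0 detX trX.
have ex_sqrt : exists Y : 'M[C]_2, psd Y /\ Y *m Y = X.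
  exists (t^-1 *: (X + d%:M)); split.
    by apply: psd_scale_shift => //; rewrite invr_ge0 ltW.
  rewrite -scalemxAl -scalemxAr scalerA mulmxDl !mulmxDr Cayley_Hamilton2 detX.
  rewrite mul_mx_scalar mul_scalar_mx -scalar_mxM.
  have -> : \tr X *: X - (d ^+ 2)%:M + d *: X + (d *: X + (d * d)%:M) = (\tr X + 2 * d) *: X.
    by apply/matrixP => i j; rewrite !mxE; case: (i == j); rewrite ?mulr1n ?mulr0n; ring.
  by rewrite trX scalerA -expr2 mulrC -exprMn mulfV ?gt_eqF // expr1n scale1r.
have [hY hYY] := xgetPex 0 ex_sqrt.
rewrite /msqrt; set Y := xget _ _ in hY hYY *.
have detY : \det Y = d.
  apply/eqP; rewrite -(eqrXn2 (n := 2) isT (psd2_det_ge0 hY) d_ge0).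
  by rewrite -detX -hYY det_mulmx expr2.
have [_ h00 h11] := psd2_herm hY.
have trY_ge0 : 0 <= \tr Y by rewrite mxtrace2 addr_ge0.
apply/eqP; rewrite -(eqrXn2 (n := 2) isT trY_ge0 (ltW t_gt0)).
by rewrite -trX -hYY mxtrace_sqr2 detY subrK.
Qed.

Definition diag2 (x y : C) : 'M[C]_2 :=
  \matrix_(i, j) (if i == j then (if i == i0 then x else y) else 0).

Lemma diag2M x y x' y' : diag2 x y *m diag2 x' y' = diag2 (x * x') (y * y').
Proof.
apply/matrixP => i j; rewrite mulmx2E !mxE.
by case: (ord2P i) => ->; case: (ord2P j) => -> /=; rewrite ?mul0r ?mulr0 ?addr0 ?add0r.
Qed.

Lemma det_diag2 x y : \det (diag2 x y) = x * y.
Proof. by rewrite det2 !mxE /= mulr0 subr0. Qed.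

Lemma mxtrace_diag2 x y : \tr (diag2 x y) = x + y.
Proof. by rewrite mxtrace2 !mxE. Qed.

Lemma psd_diag2 x y : 0 <= x -> 0 <= y -> psd (diag2 x y).
Proof.
move=> x_ge0 y_ge0 v; rewrite form2E !mxE /= !mul0r !addr0 add0r.
by rewrite addr_ge0 // mulrCA mulr_ge0 // mulrC mulcJ_ge0.
Qed.

Lemma fidelity_diag2 (a b x y : C) :
  0 <= a -> 0 <= b -> 0 <= x -> 0 <= y -> 0 < a * x + b * y ->
  fidelity (diag2 (a ^+ 2) (b ^+ 2)) (diag2 (x ^+ 2) (y ^+ 2)) = a * x + b * y.
Proof.
move=> a_ge0 b_ge0 x_ge0 y_ge0 F_gt0.
have ex_sqrt : exists B : 'M[C]_2, psd B /\ B *m B = diag2 (x ^+ 2) (y ^+ 2).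
  by exists (diag2 x y); split; [exact: psd_diag2 | rewrite diag2M -!expr2].
have [hB hBB] := xgetPex 0 ex_sqrt.
rewrite /fidelity -/(msqrt _) in hB hBB *.
set B := msqrt _ in hB hBB *.
apply: (msqrt2_trace (d := a * b * x * y)) => //.
- by apply: psd_conj (psd2_adj hB) _; apply: psd_diag2; rewrite exprn_ge0.
- by rewrite !mulr_ge0.
- by rewrite !det_mulmx mulrC mulrA -det_mulmx hBB !det_diag2; ring.
- by rewrite mxtrace_mulC mulmxA hBB diag2M mxtrace_diag2; ring.
Qed.
End TwoByTwo.

Section PreparationOracles.
Variable R : realType.
Local Notation C := R[i].
Local Notation i0 := (ord0 : 'I_2).
Local Notation i1 := (ord_max : 'I_2).

Definition rot (c s : R) : 'M[C]_2 :=
  \matrix_(i, j) (if i == j then c%:C else if i == i0 then (- s)%:C else s%:C).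

Lemma rot_scaled_unitary c s : scaled_unitary (c ^+ 2 + s ^+ 2) (rot c s).
Proof.
by split; apply/matrixP => i j; rewrite mulmx2E !mxE;
  case: (ord2P i) => ->; case: (ord2P j) => -> /=; rewrite ?conjc_real ?mulr1n ?mulr0n;
  rewrite /real_complex_def; simpc; apply/eqP; rewrite eq_complex /=;
  apply/andP; split; apply/eqP; ring.
Qed.

Lemma rotB c s c' s' : rot c s - rot c' s' = rot (c - c') (s - s').
Proof.
apply/matrixP => i j; rewrite !mxE.
by case: (i == j); case: (i == i0); rewrite -rmorphB // opprB opprK addrC.
Qed.

Lemma unitary_mul n (A B : 'M[C]_n) : unitary A -> unitary B -> unitary (A *m B).
Proof. by move=> hA hB; rewrite /unitary adjmM mulmxA -(mulmxA A) hB mulmx1. Qed.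

Lemma scaled_unitary_mull n d2 (V M : 'M[C]_n) :
  unitary V -> scaled_unitary d2 M -> scaled_unitary d2 (V *m M).
Proof.
move=> hV [hM1 hM2]; split; rewrite adjmM.
  by rewrite mulmxA -(mulmxA _ (adj V)) unitary_adj // mulmx1.
by rewrite mulmxA -(mulmxA V) hM2 mul_mx_scalar -scalemxAl hV scalemx1.
Qed.

Lemma scaled_unitary_tens1 m n d2 (A : 'M[C]_m) :
  scaled_unitary d2 A -> scaled_unitary d2 (A *t (1%:M : 'M[C]_n)).
Proof.
by case=> h1 h2; split; rewrite adjmT adjm1 tensmx_mul mulmx1 ?h1 ?h2 tensmx_scalarl.
Qed.

Definition cswap n (j0 j1 : 'I_n) : 'M[C]_(2 * n) :=
  delta_mx i0 i0 *t 1%:M + delta_mx i1 i1 *t tperm_mx j0 j1.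

Lemma cswap_unitary n (j0 j1 : 'I_n) : unitary (cswap j0 j1).
Proof.
apply: controlled_unitary.
by rewrite /adj map_tperm_mx tr_tperm_mx /tperm_mx -perm_mxM tperm2 perm_mx1.
Qed.

(* Maps [|0>|j0>] to [c |0>|j0> + s |1>|j1>]. *)
Definition prep_oracle n (j0 j1 : 'I_n) (c s : R) : 'M[C]_(2 * n) :=
  cswap j0 j1 *m (rot c s *t 1%:M).

Lemma prep_oracle_unitary n (j0 j1 : 'I_n) c s :
  c ^+ 2 + s ^+ 2 = 1 -> unitary (prep_oracle j0 j1 c s).
Proof.
move=> cs1; apply: unitary_mul; first exact: cswap_unitary.
apply: tensmx_unitary; last exact: unitary1.
by have [_] := rot_scaled_unitary c s; rewrite cs1.
Qed.

Lemma prep_oracle_diff n (j0 j1 : 'I_n) c s c' s' :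
  scaled_unitary ((c - c') ^+ 2 + (s - s') ^+ 2)
    (prep_oracle j0 j1 c s - prep_oracle j0 j1 c' s').
Proof.
rewrite /prep_oracle -mulmxBr -tensmxBl rotB.
exact/scaled_unitary_mull/scaled_unitary_tens1/rot_scaled_unitary/cswap_unitary.
Qed.

Lemma tensmx_colE m k (u : 'cV[C]_m) (w : 'cV[C]_k) i l :
  (u *t w) (mxtens_index (i, l)) ord0 = u i 0 * w l 0.
Proof.
have -> : (ord0 : 'I_(1 * 1)) = mxtens_index (ord0 : 'I_1, ord0 : 'I_1) by apply: val_inj.
exact: tensmxE.
Qed.

Lemma addmxE m n (A B : 'M[C]_(m, n)) i j : (A + B) i j = A i j + B i j.
Proof. by rewrite mxE. Qed.

Lemma ptrace_pure_tens2 m k (u1 u2 : 'cV[C]_m) (w1 w2 : 'cV[C]_k) i j :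
  ptrace_pure (u1 *t w1 + u2 *t w2) i j =
    u1 i 0 * (u1 j 0)^* * dotv w1 w1 + u1 i 0 * (u2 j 0)^* * dotv w2 w1
  + u2 i 0 * (u1 j 0)^* * dotv w1 w2 + u2 i 0 * (u2 j 0)^* * dotv w2 w2.
Proof.
rewrite /ptrace_pure mxE.
under eq_bigr do rewrite !addmxE !tensmx_colE.
rewrite !dotvE !mulr_sumr -!big_split /=; apply: eq_bigr => l _.
by rewrite !rmorphD !rmorphM /=; ring.
Qed.

Lemma dotv_delta n (j j' : 'I_n) :
  dotv (delta_mx j 0) (delta_mx j' 0) = (j == j')%:R :> C.
Proof.
rewrite dotvE (bigD1 j) //= big1 => [|l hl]; last by rewrite !mxE (negbTE hl) rmorph0 mul0r.
by rewrite !mxE !eqxx /= rmorph1 mul1r addr0 andbT.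
Qed.

Lemma ket0_delta n (j0 : 'I_n) : val j0 = 0%N -> @ket0 R n = delta_mx j0 0.
Proof.
by move=> j00; apply/matrixP => i k; rewrite [k]ord1 !mxE -val_eqE /= j00 andbT.
Qed.

Lemma tperm_mx_delta n (j0 j1 : 'I_n) :
  tperm_mx j0 j1 *m delta_mx j0 0 = delta_mx j1 0 :> 'cV[C]_n.
Proof.
apply/matrixP => i k; rewrite -xrowE /xrow /row_perm [k]ord1 !mxE !andbT.
case: tpermP => [->|->|/eqP/negbTE -> /eqP/negbTE ->]; by rewrite ?eqxx // eq_sym.
Qed.

Lemma tensmx_mulv m n p q (A : 'M[C]_(m, n)) (B : 'M[C]_(p, q)) (u : 'cV[C]_n) (w : 'cV[C]_q) :
  (A *t B) *m (u *t w : 'cV_(n * q)) = (A *m u) *t (B *m w) :> 'cV_(m * p).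
Proof. exact: (tensmx_mul A B u w). Qed.

Lemma ket0_tens n : (0 < n)%N -> @ket0 R (2 * n) = @ket0 R 2 *t @ket0 R n.
Proof.
move=> n_gt0; apply/matrixP => i k.
case: (mxtens_indexP i) => a b; rewrite [k]ord1 tensmx_colE !mxE /= -natrM mulnb.
by rewrite addn_eq0 muln_eq0 (gtn_eqF n_gt0) orbF.
Qed.

Lemma ptrace_prep_oracle n (j0 j1 : 'I_n) c s :
  val j0 = 0%N -> j0 != j1 ->
  ptrace_pure (prep_oracle j0 j1 c s *m @ket0 R (2 * n)) = diag2 (c ^+ 2)%:C (s ^+ 2)%:C.
Proof.
move=> j00 j01; have n_gt0 : (0 < n)%N by case: n j0 {j1 j01 j00} => [[]|].
rewrite ket0_tens // (ket0_delta j00) /prep_oracle -mulmxA tensmx_mulv mul1mx.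
rewrite /cswap mulmxDl !tensmx_mulv !mul1mx tperm_mx_delta.
apply/matrixP => i j; rewrite ptrace_pure_tens2 !dotv_delta eqxx (negbTE j01) eq_sym (negbTE j01).
rewrite !mulr1 !mulr0 !addr0 !mulmx2E !mxE /=.
by case: (ord2P i) => ->; case: (ord2P j) => -> /=;
  rewrite ?mul1r ?mul0r ?mulr1 ?mulr0 ?addr0 ?add0r ?rmorph0 ?conjc_real //;
  rewrite /real_complex_def; simpc; apply/eqP; rewrite eq_complex /=;
  apply/andP; split; apply/eqP; ring.
Qed.

End PreparationOracles.

Section LowerBound.
Variable R : realType.
Local Notation C := R[i].

Lemma query_lower_bound D W T (U : nat -> 'M[C]_(2 * D * W)) q est
    (Orho Osig Orho' Osig' : 'M[C]_D) d2 (f f' eps : R) :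
  (forall k, (k <= T)%N -> unitary (U k)) ->
  unitary Orho -> unitary Osig -> unitary Orho' -> unitary Osig' ->
  scaled_unitary d2 (Orho - Orho') -> scaled_unitary d2 (Osig - Osig') -> 0 <= d2 ->
  2 * eps < `|f - f'| ->
  2 / 3 <= success_prob T U q est Orho Osig f%:C eps ->
  2 / 3 <= success_prob T U q est Orho' Osig' f'%:C eps ->
  1 / 18 <= T%:R ^+ 2 * d2.
Proof.
move=> U_unitary hrho hsig hrho' hsig' drho dsig d2_ge0 gap succ succ'.
have phi_le1 := sqnormv_alg_state q U_unitary hrho' hsig' (leqnn T).
have hyb := alg_state_hybrid q U_unitary hrho hsig hrho' hsig' drho dsig d2_ge0 (leqnn T).
apply: le_trans (success_separation gap succ succ' phi_le1) _.
rewrite -sqr_normv -[d2]sqr_sqrtr // -exprMn.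
by rewrite ler_pXn2r ?qualifE /= ?normv_ge0 ?mulr_ge0 ?sqrtr_ge0.
Qed.

Definition bounded_angle (c s : R) : Prop :=
  [/\ 0 < c, 0 < s, c ^+ 2 + s ^+ 2 = 1, 1 / 64 <= c ^+ 2 & 1 / 64 <= s ^+ 2].

Lemma bounded_angleC c s : bounded_angle c s -> bounded_angle s c.
Proof. by case=> c_gt0 s_gt0 cs1 c_ge s_ge; split; rewrite // addrC. Qed.

Lemma diag2_subr (x y k : C) : diag2 x y - k%:M = diag2 (x - k) (y - k).
Proof.
apply/matrixP => i j; rewrite !mxE.
by case: (ord2P i) => ->; case: (ord2P j) => -> /=; rewrite ?subr0 ?mulr1n ?mulr0n ?subr0.
Qed.

Section Oracles.
Variables (a : nat) (j0 j1 : 'I_(2 ^ a)).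
Hypotheses (j00 : val j0 = 0%N) (j01 : j0 != j1).

Lemma prep_oracle_admissible c s :
  bounded_angle c s -> admissible (n := 1) 64 (prep_oracle j0 j1 c s).
Proof.
case=> _ _ cs1 c_ge s_ge; split; first exact: prep_oracle_unitary.
rewrite /loewner_le /prepared_state ptrace_prep_oracle // diag2_subr.
by apply: psd_diag2; rewrite -rmorphB ler0c subr_ge0; lra.
Qed.

Lemma fidelity_prep_oracle c s : bounded_angle c s ->
  fidelity (prepared_state (n := 1) (prep_oracle j0 j1 c s))
           (prepared_state (n := 1) (prep_oracle j0 j1 s c)) = (2 * c * s)%:C.
Proof.
case=> c_gt0 s_gt0 _ _ _.
rewrite /prepared_state !ptrace_prep_oracle // !rmorphXn fidelity_diag2 ?ler0c ?ltW //.
  by rewrite -!rmorphM -rmorphD; congr (_ %:C); ring.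
by rewrite -!rmorphM -rmorphD ltcR addr_gt0 ?mulr_gt0.
Qed.

End Oracles.

Lemma hard_angles (eps : R) : 0 < eps -> eps < 1 / 4 ->
  exists c0 s0 c1 s1, [/\ bounded_angle c0 s0, bounded_angle c1 s1,
    2 * eps < `|2 * c0 * s0 - 2 * c1 * s1| &
    (c0 - c1) ^+ 2 + (s0 - s1) ^+ 2 <= 5 * eps ^+ 2].
Proof.
move=> eps_gt0 eps_lt.
pose s0 : R := 1 / 8; pose s1 : R := 1 / 8 + 2 * eps.
pose c0 := Num.sqrt (1 - s0 ^+ 2); pose c1 := Num.sqrt (1 - s1 ^+ 2).
have c0E : c0 ^+ 2 = 1 - s0 ^+ 2 by rewrite sqr_sqrtr // /s0; lra.
have c1E : c1 ^+ 2 = 1 - s1 ^+ 2 by rewrite sqr_sqrtr // /s1; nra.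
have c0_ge : 3 / 4 <= c0.
  by rewrite -(@ler_pXn2r _ 2) ?qualifE /= ?sqrtr_ge0 ?c0E /s0 //; lra.
have c1_ge : 3 / 4 <= c1.
  by rewrite -(@ler_pXn2r _ 2) ?qualifE /= ?sqrtr_ge0 ?c1E /s1 //; nra.
have dc : (c0 - c1) * (c0 + c1) = 2 * eps * (1 / 4 + 2 * eps).
  by rewrite -subr_sqr c0E c1E /s0 /s1; field.
have dc_ge0 : 0 <= c0 - c1 by nra.
have dc_le : c0 - c1 <= eps by nra.
exists c0, s0, c1, s1; split.
- by split; rewrite ?c0E /s0; lra.
- by split; rewrite ?c1E /s1; nra.
- rewrite distrC; apply: lt_le_trans (ler_norm _); rewrite /s0 /s1.
  have : 0 <= eps * (c1 - 3 / 4) by apply: mulr_ge0; lra.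
  nra.
- rewrite /s0 /s1; nra.
Qed.

Lemma inv_eps_le (eps T d2 : R) : 0 < eps -> 0 <= T ->
  1 / 18 <= T ^+ 2 * d2 -> d2 <= 5 * eps ^+ 2 -> 1 / 12 / eps <= T.
Proof.
move=> eps_gt0 T_ge0 lb d2_le; rewrite ler_pdivrMr //.
have Te_ge0 : 0 <= T * eps by apply: mulr_ge0; lra.
have : 1 / 18 <= 5 * (T * eps) ^+ 2.
  by apply: le_trans lb _; rewrite exprMn mulrCA ler_wpM2l ?sqr_ge0.
nra.
Qed.

End LowerBound.

Theorem mainTheorem10 (R : realType) :
  exists kappa0 : R, exists c : R, 1 <= kappa0 /\ 0 < c /\
  forall eps : R, 0 < eps < 1 / 4 ->
  forall (a : nat), (0 < a)%N ->
  forall (W T : nat) (U : nat -> 'M[R[i]]_(2 * (2 ^ 1 * 2 ^ a) * W))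
         (q : nat -> bool * bool * bool)
         (est : 'I_(2 * (2 ^ 1 * 2 ^ a) * W) -> R),
  (forall k, (k <= T)%N -> unitary (U k)) ->
  (forall Orho Osig : 'M[R[i]]_(2 ^ 1 * 2 ^ a),
      admissible kappa0 Orho -> admissible kappa0 Osig ->
      2 / 3 <= success_prob T U q est Orho Osig
                 (fidelity (prepared_state Orho) (prepared_state Osig)) eps) ->
  c / eps <= T%:R.
Proof.
exists 64, (1 / 12); split; first by lra.
split; first by lra.
move=> eps /andP[eps_gt0 eps_lt] a a_gt0 W T U q est U_unitary success.
have [c0 [s0 [c1 [s1 [h0 h1 gap close]]]]] := hard_angles eps_gt0 eps_lt.
have j0_lt : (0 < 2 ^ a)%N by rewrite expn_gt0.
have j1_lt : (1 < 2 ^ a)%N by rewrite -{1}(expn0 2) ltn_exp2l.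
pose O c s : 'M[R[i]]_(2 ^ 1 * 2 ^ a) := prep_oracle (Ordinal j0_lt) (Ordinal j1_lt) c s.
have adm c s : bounded_angle c s -> admissible 64 (O c s) by apply: prep_oracle_admissible.
have succ c s : bounded_angle c s ->
    2 / 3 <= success_prob T U q est (O c s) (O s c) (2 * c * s)%:C eps.
  move=> hcs; have := success _ _ (adm _ _ hcs) (adm _ _ (bounded_angleC hcs)).
  by rewrite /O fidelity_prep_oracle.
apply: (inv_eps_le eps_gt0 (ler0n _ T) _ close).
apply: (query_lower_bound U_unitary (adm _ _ h0).1 (adm _ _ (bounded_angleC h0)).1
  (adm _ _ h1).1 (adm _ _ (bounded_angleC h1)).1 _ _ _ gap (succ _ _ h0) (succ _ _ h1)).
- exact: prep_oracle_diff.
- by rewrite addrC; apply: prep_oracle_diff.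
- by rewrite addr_ge0 ?sqr_ge0.
Qed.
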